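(* Let $\theta$ be an irrational real number. For integers $j\geq0$ and real $t>0$ define $$\tau_j(t)=-(-1)^j\,\frac{q_{j-1}-(-1)^j\frac{4i\pi t}{q_{j-2}+\theta_jq_{j-1}}}{q_j+(-1)^j\frac{4i\pi t}{q_{j-1}+\theta_{j+1}q_j}}.$$ Then for all $j\geq0$ and $t>0$, $$\bigl(\tau_j(t)-(-1)^ja_{j+1}\bigr)\,\tau_{j+1}(t)=-1.$$
   Context: Continued fraction notation for irrational $\theta$: $\theta_0=\theta$, $a_k=\lfloor\theta_k\rfloor$, $\theta_{k}=\frac{1}{\theta_{k-1}-a_{k-1}}$ for $k\geq1$. Denominators of convergents: $q_{-2}=1$, $q_{-1}=0$, $q_k=q_{k-2}+a_kq_{k-1}$ for $k\geq0$. *)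

From Stdlib Require Import Reals ZArith.
From Coquelicot Require Import Coquelicot.
Open Scope R_scope.

Definition cf_floor (x : R) : Z := Int_part x.

Fixpoint cf_theta (theta : R) (k : nat) : R :=
  match k with
  | O => theta
  | S k' => / (cf_theta theta k' - IZR (cf_floor (cf_theta theta k')))
  end.

Definition cf_a (theta : R) (k : nat) : R := IZR (cf_floor (cf_theta theta k)).

(* shifted denominators: cf_qs theta n = q_{n-2} *)
Fixpoint cf_qs (theta : R) (n : nat) : R :=
  match n with
  | O => 1
  | S O => 0
  | S ((S n'') as n') => cf_qs theta n'' + cf_a theta n'' * cf_qs theta n'
  end.

Definition cf_q (theta : R) (k : Z) : R := cf_qs theta (Z.to_nat (k + 2)).

Definition irrational (x : R) : Prop :=
  forall (p q : Z), q <> 0%Z -> x <> IZR p / IZR q.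

Definition tau (theta : R) (j : nat) (t : R) : C :=
  let s : C := RtoC ((-1) ^ j) in
  let z : C := (RtoC (4 * PI * t) * Ci)%C in
  let jz := Z.of_nat j in
  (- s * ((RtoC (cf_q theta (jz - 1))
            - s * z / RtoC (cf_q theta (jz - 2) + cf_theta theta j * cf_q theta (jz - 1)))
          / (RtoC (cf_q theta jz)
            + s * z / RtoC (cf_q theta (jz - 1) + cf_theta theta (S j) * cf_q theta jz))))%C.

(** Writing [s = (-1)^j], [z = 4 i pi t] and [D_k = q_{k-2} + theta_k q_{k-1}], one has
    [tau_j = -s (q_{j-1} - s z / D_j) / (q_j + s z / D_{j+1})], and the numerator of
    [tau_{j+1}] is [s] times the denominator of [tau_j].  The product therefore telescopes to
    [-s^2 (q_{j-1} + a_{j+1} q_j - s z (1/D_j - a_{j+1}/D_{j+1})) / (q_{j+1} - s z / D_{j+2})],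
    which is [-1] because [q_{j+1} = q_{j-1} + a_{j+1} q_j] and, from [D_{k+1} = theta_{k+1} D_k]
    and [theta_{k+2} = 1 / (theta_{k+1} - a_{k+1})],
    [1/D_{j+2} = 1/D_j - a_{j+1}/D_{j+1}].  Irrationality keeps every [theta_k - a_k]
    positive, so all [D_k] are positive and the denominators, having nonzero imaginary
    part, never vanish. *)
From Stdlib Require Import Reals ZArith Lra Lia Psatz.
From Coquelicot Require Import Coquelicot.
Open Scope R_scope.

Lemma irrational_inv_frac (x : R) :
  irrational x -> irrational (/ (x - IZR (cf_floor x))).
Proof.
  intros Hx p q Hq E.
  set (f := IZR (cf_floor x)) in *.
  assert (Hfrac : x - f <> 0).
  { intro E0; apply (Hx (cf_floor x) 1%Z); [lia|]; rewrite Rdiv_1_r; fold f; lra. }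
  destruct (Z.eq_dec p 0) as [->|Hp].
  - apply (Rinv_neq_0_compat _ Hfrac); rewrite E; unfold Rdiv; ring.
  - assert (Hp' : IZR p <> 0) by (apply not_0_IZR; exact Hp).
    assert (Hq' : IZR q <> 0) by (apply not_0_IZR; exact Hq).
    assert (Efrac : x - f = IZR q / IZR p).
    { rewrite <- (Rinv_inv (x - f)), E; field; auto. }
    apply (Hx (q + cf_floor x * p)%Z p Hp).
    rewrite plus_IZR, mult_IZR; fold f.
    replace x with (x - f + f) by ring; rewrite Efrac; field; auto.
Qed.

Lemma irrational_cf_theta (theta : R) (k : nat) :
  irrational theta -> irrational (cf_theta theta k).
Proof. intros H; induction k; simpl; auto using irrational_inv_frac. Qed.

Lemma cf_frac_pos (theta : R) (k : nat) :
  irrational theta -> 0 < cf_theta theta k - cf_a theta k.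
Proof.
  intros H; unfold cf_a, cf_floor.
  destruct (base_Int_part (cf_theta theta k)) as [Hle _].
  destruct (Req_dec (IZR (Int_part (cf_theta theta k))) (cf_theta theta k)) as [E|E].
  - exfalso; apply (irrational_cf_theta theta k H (Int_part (cf_theta theta k)) 1%Z); [lia|].
    rewrite Rdiv_1_r; auto.
  - lra.
Qed.

Definition cf_D (theta : R) (k : nat) : R :=
  cf_qs theta k + cf_theta theta k * cf_qs theta (S k).

Lemma cf_D_succ (theta : R) (k : nat) :
  irrational theta -> cf_D theta (S k) = cf_D theta k * cf_theta theta (S k).
Proof.
  intros H; pose proof (cf_frac_pos theta k H).
  unfold cf_D; simpl; fold (cf_a theta k); field; lra.
Qed.

Lemma cf_D_pos (theta : R) (k : nat) : irrational theta -> 0 < cf_D theta k.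
Proof.
  intros H; induction k as [|k IH].
  - unfold cf_D; simpl; lra.
  - rewrite cf_D_succ by exact H.
    apply Rmult_lt_0_compat; [exact IH|].
    apply Rinv_0_lt_compat, (cf_frac_pos theta k H).
Qed.

Lemma cf_D_inv_recurrence (theta : R) (k : nat) : irrational theta ->
  / cf_D theta (S (S k)) = / cf_D theta k - cf_a theta (S k) / cf_D theta (S k).
Proof.
  intros H.
  pose proof (cf_D_pos theta k H); pose proof (cf_frac_pos theta (S k) H).
  assert (Htheta : 0 < cf_theta theta (S k)) by apply Rinv_0_lt_compat, (cf_frac_pos theta k H).
  rewrite !cf_D_succ by exact H.
  change (cf_theta theta (S (S k))) with (/ (cf_theta theta (S k) - cf_a theta (S k))).
  field; lra.
Qed.

Lemma cf_qE (theta : R) (z : Z) (n : nat) :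
  (z + 2)%Z = Z.of_nat n -> cf_q theta z = cf_qs theta n.
Proof. intros E; unfold cf_q; rewrite E, Nat2Z.id; reflexivity. Qed.

Definition tau_form (s x y z D0 D1 : C) : C :=
  (- s * ((x - s * z / D0) / (y + s * z / D1)))%C.

Lemma tau_formE (theta : R) (j : nat) (t : R) :
  tau theta j t =
  tau_form (RtoC ((-1) ^ j)) (RtoC (cf_qs theta (S j))) (RtoC (cf_qs theta (S (S j))))
           (RtoC (4 * PI * t) * Ci)%C (RtoC (cf_D theta j)) (RtoC (cf_D theta (S j))).
Proof.
  unfold tau, tau_form, cf_D.
  rewrite (cf_qE theta (Z.of_nat j - 1) (S j)) by lia.
  rewrite (cf_qE theta (Z.of_nat j - 2) j) by lia.
  rewrite (cf_qE theta (Z.of_nat j) (S (S j))) by lia.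
  reflexivity.
Qed.

Lemma Cplus_div_neq0 (u v D : C) :
  D <> 0%C -> (u + v / D)%C <> 0%C -> (u * D + v)%C <> 0%C.
Proof.
  intros HD H E; apply H.
  replace (u + v / D)%C with ((u * D + v) / D)%C by (field; exact HD).
  rewrite E; unfold Cdiv; ring.
Qed.

Lemma tau_form_mul_shift (s s' a x y x' z D0 D1 D2 : C) :
  s' = (- s)%C -> x' = (x + a * y)%C -> (/ D2 = / D0 - a / D1)%C ->
  D0 <> 0%C -> D1 <> 0%C -> D2 <> 0%C ->
  (y + s * z / D1)%C <> 0%C -> (x' + s' * z / D2)%C <> 0%C ->
  ((tau_form s x y z D0 D1 - s * a) * tau_form s' y x' z D1 D2 = - (s * s))%C.
Proof.
  intros -> -> HD2 HD0 HD1 HD2' HN HM.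
  assert (HM' : (x + a * y - s * z / D2)%C <> 0%C).
  { intro E; apply HM; rewrite <- E; unfold Cdiv; ring. }
  assert (Eleft : (tau_form s x y z D0 D1 - s * a
                = - s * ((x + a * y - s * z / D2) / (y + s * z / D1)))%C).
  { unfold tau_form; unfold Cdiv at 5; rewrite HD2; field; auto using Cplus_div_neq0. }
  rewrite Eleft; unfold tau_form; field; auto using Cplus_div_neq0.
Qed.

Lemma imag_shift_neq0 (x s r D : R) : s <> 0 -> r <> 0 -> D <> 0 ->
  (RtoC x + RtoC s * (RtoC r * Ci) / RtoC D)%C <> 0%C.
Proof.
  intros Hs Hr HD E.
  apply (f_equal Im) in E.
  unfold Cdiv, Cinv, Cplus, Cmult, RtoC, Ci in E; cbn [Re Im fst snd] in E.
  field_simplify in E; [|exact HD].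
  assert (Hsr : s * r = 0).
  { replace (s * r) with (s * r * D / D ^ 2 * D) by (field; exact HD).
    rewrite E; ring. }
  apply Rmult_integral in Hsr as [Hsr|Hsr]; auto.
Qed.

Theorem theorem6p1 (theta : R) (Hirr : irrational theta) (j : nat) (t : R) (ht : 0 < t) :
  ((tau theta j t - RtoC ((-1) ^ j * cf_a theta (S j))) * tau theta (S j) t = RtoC (-1))%C.
Proof.
  rewrite !tau_formE, (RtoC_mult ((-1) ^ j)).
  assert (Hs : (-1) ^ j <> 0) by (apply pow_nonzero; lra).
  assert (Hsq : (-1) ^ j * (-1) ^ j = 1).
  { rewrite <- Rpow_mult_distr; replace (-1 * -1) with 1 by ring; apply pow1. }
  assert (Hr : 4 * PI * t <> 0) by (pose proof PI_RGT_0; nra).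
  pose proof (cf_D_pos theta j Hirr) as HD0.
  pose proof (cf_D_pos theta (S j) Hirr) as HD1.
  pose proof (cf_D_pos theta (S (S j)) Hirr) as HD2.
  replace (RtoC (-1)) with (- (RtoC ((-1) ^ j) * RtoC ((-1) ^ j)))%C
    by (rewrite <- RtoC_mult, Hsq, <- RtoC_opp; f_equal; lra).
  eapply tau_form_mul_shift.
  - simpl; rewrite RtoC_mult; ring.
  - simpl; fold (cf_a theta (S j)); rewrite RtoC_plus, RtoC_mult; reflexivity.
  - rewrite <- RtoC_inv, cf_D_inv_recurrence by (exact Hirr || lra).
    rewrite RtoC_minus, RtoC_div, !RtoC_inv by lra; reflexivity.
  - intro E; apply RtoC_inj in E; lra.
  - intro E; apply RtoC_inj in E; lra.
  - intro E; apply RtoC_inj in E; lra.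
  - apply imag_shift_neq0; auto; lra.
  - apply imag_shift_neq0; auto; [simpl; nra | lra].
Qed.
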